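(* Let $L$ be a finite extension of $\mathbb{Z}_\mathrm{max}$ such that $L$ is selective, i.e. for all $x,y\in L$ either $x+y=x$ or $x+y=y$. Then $\mathrm{ui}(L/\mathbb{Z}_\mathrm{max})<\infty$.
   Context: A semifield is a commutative semiring in which every nonzero element is a unit. $\mathbb{Z}_\mathrm{max}=\mathbb{Z}\cup\{-\infty\}$ is the semifield with addition $\max$ and multiplication ordinary addition. An extension of a semifield $K$ is a semifield $L$ with an injective homomorphism $K\to L$; it is finite if $L$ is a finitely generated $K$-semimodule. The unit index is $\mathrm{ui}(L/K)=|L^\times/K^\times|$. *)

From HB Require Import structures.
From mathcomp Require Import all_boot all_order all_algebra.
Set Implicit Arguments. Unset Strict Implicit. Unset Printing Implicit Defensive.
Import Order.TTheory GRing.Theory Num.Theory.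
Local Open Scope ring_scope.

(* The semifield Z_max = Z ∪ {-oo}: None is -oo, Some z is z. *)
Definition Zmax := option int.

Definition zmax_add (a b : Zmax) : Zmax :=
  match a, b with
  | None, _ => b
  | _, None => a
  | Some x, Some y => Some (Num.max x y)
  end.

Definition zmax_mul (a b : Zmax) : Zmax :=
  match a, b with
  | Some x, Some y => Some (x + y)
  | _, _ => None
  end.

Definition zmax_zero : Zmax := None.
Definition zmax_one : Zmax := Some 0.

Definition is_semifield (L : comNzSemiRingType) : Prop :=
  forall x : L, x <> 0 -> exists y : L, x * y = 1.

Definition is_unit (L : comNzSemiRingType) (x : L) : Prop :=
  exists y : L, x * y = 1.

Definition zmax_unit (a : Zmax) : Prop :=
  exists b : Zmax, zmax_mul a b = zmax_one.

Definition zmax_extension (L : comNzSemiRingType) (f : Zmax -> L) : Prop :=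
  [/\ f zmax_zero = 0, f zmax_one = 1,
      (forall a b, f (zmax_add a b) = f a + f b),
      (forall a b, f (zmax_mul a b) = f a * f b)
    & injective f].

(* L is a finitely generated Z_max-semimodule (scalar action a . x = f a * x) *)
Definition finite_over (L : comNzSemiRingType) (f : Zmax -> L) : Prop :=
  exists s : seq L, forall x : L,
    exists a : seq Zmax, size a = size s /\
      x = \sum_(i < size s) f (nth zmax_zero a i) * nth 0 s i.

Definition selective (L : comNzSemiRingType) : Prop :=
  forall x y : L, x + y = x \/ x + y = y.

(* ui(L/Z_max) = |L^x / Z_max^x| is finite: there are finitely many cosets,
   i.e. a finite list of units of L such that every unit of L lies in the
   coset u * f(Z_max^x) of one of them. *)
Definition finite_unit_index (L : comNzSemiRingType) (f : Zmax -> L) : Prop :=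
  exists s : seq L, (forall u, u \in s -> is_unit u) /\
    forall x : L, is_unit x ->
      exists2 u, u \in s & exists2 k : Zmax, zmax_unit k & x = u * f k.

(* In a selective semiring a finite sum equals one of its terms or is 0.  Write
   a unit x of L as a combination sum_i f(a_i) s_i of the finitely many
   generators s_i; then x = f(a_i) s_i for some i, with a_i finite (x <> 0).
   Hence s_i is a unit and x lies in the coset s_i f(Z_max^x), so the units
   among the generators represent all cosets of L^x / f(Z_max^x). *)
From mathcomp Require Import all_boot all_order all_algebra.
From Stdlib Require Import ClassicalEpsilon.
Set Implicit Arguments.
Unset Strict Implicit.
Import GRing.Theory.
Local Open Scope ring_scope.

Lemma selective_sum_eq0_or_term (L : comNzSemiRingType) (hsel : selective L)
    n (F : 'I_n -> L) :
  \sum_(i < n) F i = 0 \/ exists i, \sum_(i < n) F i = F i.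
Proof.
elim: n F => [|n IH] F; first by left; rewrite big_ord0.
rewrite big_ord_recr /=.
case: (hsel (\sum_(i < n) F (widen_ord (leqnSn n) i)) (F ord_max)) => ->.
- case: (IH (fun i => F (widen_ord (leqnSn n) i))) => [->|[i ->]]; first by left.
  by right; exists (widen_ord (leqnSn n) i).
- by right; exists ord_max.
Qed.

Lemma is_unit_neq0 (L : comNzSemiRingType) (x : L) : is_unit x -> x <> 0.
Proof. by move=> [y xy] x0; move: xy; rewrite x0 mul0r => /esym/eqP; rewrite oner_eq0. Qed.

Lemma is_unitMl (L : comNzSemiRingType) (x y : L) : is_unit (x * y) -> is_unit x.
Proof. by move=> [z xyz]; exists (y * z); rewrite mulrA. Qed.

Lemma zmax_unit_finite (z : int) : zmax_unit (Some z).
Proof. by exists (Some (- z)); rewrite /zmax_mul /zmax_one subrr. Qed.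

Definition is_unitb (L : comNzSemiRingType) (u : L) : bool :=
  excluded_middle_informative (is_unit u).

Lemma is_unitbP (L : comNzSemiRingType) (u : L) : reflect (is_unit u) (is_unitb u).
Proof. exact: sumboolP. Qed.

Lemma unit_eq_generator_scaled (L : comNzSemiRingType) (f : Zmax -> L)
    (f0 : f zmax_zero = 0) (hsel : selective L) (s : seq L)
    (hs : forall x : L, exists a : seq Zmax, size a = size s /\
      x = \sum_(i < size s) f (nth zmax_zero a i) * nth 0 s i)
    (x : L) :
  is_unit x -> exists2 i : 'I_(size s), is_unit (nth 0 s i) &
    exists2 z : int, zmax_unit (Some z) & x = nth 0 s i * f (Some z).
Proof.
move=> xU.
have x0 := is_unit_neq0 xU.
have [a [_ ex]] := hs x.
have [sum0|[i sumi]] := selective_sum_eq0_or_term hsel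
  (fun i : 'I_(size s) => f (nth zmax_zero a i) * nth 0 s i).
  by case: x0; rewrite ex.
rewrite sumi in ex.
case: (nth zmax_zero a i) ex => [z|] ex; last by case: x0; rewrite ex f0 mul0r.
exists i; last by exists z; [exact: zmax_unit_finite | rewrite ex mulrC].
by apply: (@is_unitMl _ _ (f (Some z))); rewrite mulrC -ex.
Qed.

Theorem mainTheorem9 (L : comNzSemiRingType)
  (hL : is_semifield L) (f : Zmax -> L) (hf : zmax_extension f)
  (hfin : finite_over f) (hsel : selective L) :
  finite_unit_index f.
Proof.
have [f0 _ _ _ _] := hf; have [s hs] := hfin.
exists [seq u <- s | is_unitb u]; split.
  by move=> u; rewrite mem_filter => /andP[/is_unitbP].
move=> x /(unit_eq_generator_scaled f0 hsel hs) [i siU [z zU ->]].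
exists (nth 0 s i); last by exists (Some z).
by rewrite mem_filter mem_nth // andbT; apply/is_unitbP.
Qed.
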